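(* Let $R$ be a reduced commutative ring and let $I$ be a pure ideal of $R$. Then $R$ is Gaussian if and only if $R\bowtie I$ is Gaussian.
   Context: All rings are commutative with identity. For an ideal $I$ of $R$, $R\bowtie I=\{(r,r+i): r\in R,\ i\in I\}$ is a subring of $R\times R$ (componentwise operations, unit $(1,1)$). An ideal $I$ is pure if $R/I$ is a flat $R$-module. A ring $A$ is Gaussian if $c(fg)=c(f)c(g)$ for all $f,g\in A[X]$, where $c(f)$ is the ideal of $A$ generated by the coefficients of $f$. *)

From HB Require Import structures.
From mathcomp Require Import all_boot all_order all_algebra.
From mathcomp Require Import ring.
Set Implicit Arguments. Unset Strict Implicit. Unset Printing Implicit Defensive.
Import GRing.Theory.
Local Open Scope ring_scope.

Definition is_ideal (R : comNzRingType) (I : {pred R}) : Prop :=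
  [/\ 0 \in I,
      (forall x y, x \in I -> y \in I -> x - y \in I) &
      (forall r x, x \in I -> r * x \in I)].

Definition reduced (R : comNzRingType) : Prop :=
  forall (x : R) (n : nat), x ^+ n = 0 -> x = 0.

Definition ideal_smul (R : comNzRingType) (I : {pred R}) (M : lmodType R)
    (P : {pred M}) (m : M) : Prop :=
  exists (n : nat) (a : 'I_n -> R) (x : 'I_n -> M),
    (forall k, a k \in I /\ x k \in P) /\ m = \sum_(k < n) a k *: x k.

Definition is_submodule (R : comNzRingType) (M : lmodType R) (N : {pred M}) : Prop :=
  [/\ 0 \in N,
      (forall x y, x \in N -> y \in N -> x - y \in N) &
      (forall (r : R) x, x \in N -> r *: x \in N)].

(* R/I is a flat R-module: for every R-module M and submodule N <= M, the map
   N (x) R/I -> M (x) R/I is injective.  Using the canonical identification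
   P (x)_R R/I = P / I P, this says N /\ I M <= I N. *)
Definition flat_quotient (R : comNzRingType) (I : {pred R}) : Prop :=
  forall (M : lmodType R) (N : {pred M}), is_submodule N ->
    forall m : M, m \in N -> ideal_smul I [pred x : M | true] m ->
      ideal_smul I N m.

Definition pure_ideal (R : comNzRingType) (I : {pred R}) : Prop :=
  is_ideal I /\ flat_quotient I.

Definition content (A : comNzRingType) (f : {poly A}) (a : A) : Prop :=
  exists u : 'I_(size f) -> A, a = \sum_(i < size f) u i * f`_i.

Definition ideal_prod (A : comNzRingType) (J K : A -> Prop) (a : A) : Prop :=
  exists (n : nat) (x y : 'I_n -> A),
    (forall k, J (x k) /\ K (y k)) /\ a = \sum_(k < n) x k * y k.

Definition gaussian (A : comNzRingType) : Prop :=
  forall (f g : {poly A}) (a : A),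
    content (f * g) a <-> ideal_prod (content f) (content g) a.

Record ideal (R : comNzRingType) := Ideal {
  ideal_pred :> {pred R};
  ideal_is_ideal : is_ideal ideal_pred }.

(* The amalgamated duplication R |><| I = {(r, r + i) : r in R, i in I}, a
   subring of R x R. *)
Section Amalg.
Variables (R : comNzRingType) (J : ideal R).
Let I : {pred R} := J.

Definition amalg_pred : {pred R * R} := [pred x | x.2 - x.1 \in I].

Lemma amalg_subring : subring_closed amalg_pred.
Proof.
case: (ideal_is_ideal J) => I0 IB IM; split.
- by rewrite inE /= subrr.
- move=> [a b] [c d]; rewrite !inE /= => h1 h2.
  have -> : b - d - (a - c) = (b - a) - (d - c) by ring.
  exact: IB.
- move=> [a b] [c d]; rewrite !inE /= => h1 h2.
  have -> : b * d - a * c = b * (d - c) - (- (c * (b - a))).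
    by ring.
  apply: (IB); first exact: IM.
  have -> : - (c * (b - a)) = 0 - c * (b - a) by rewrite sub0r.
  by apply: (IB) => //; apply: (IM).
Qed.

HB.instance Definition _ := GRing.isSubringClosed.Build (R * R)%type amalg_pred
  amalg_subring.

Record amalg := Amalg { amalg_val : R * R; _ : amalg_val \in amalg_pred }.

HB.instance Definition _ := [isSub for amalg_val].
HB.instance Definition _ := [Choice of amalg by <:].
HB.instance Definition _ := [SubChoice_isSubComNzRing of amalg by <:].
End Amalg.

From HB Require Import structures.
From mathcomp Require Import all_boot all_order all_algebra.
From mathcomp Require Import ring boolp.
Set Implicit Arguments. Unset Strict Implicit. Unset Printing Implicit Defensive.
Import GRing.Theory.
Local Open Scope ring_scope.

(* A ring A is Gaussian iff every product f_i g_j of coefficients lies in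
   c(fg).  The first projection R |><| I -> R has the diagonal as a section,
   so this criterion descends from R |><| I to R.  Conversely, let F, G be
   polynomials over R |><| I with projections f, g and h, h'.  Purity yields
   e in I fixing the finitely many differences of their coefficients, so that
   (1 - e) f = (1 - e) h and (1 - e) g = (1 - e) h'.  Writing
   f_i g_j = sum a_k (fg)_k and h_i h'_j = sum b_k (hh')_k, the elements
   (a_k, (1 - e) a_k + e b_k) of R |><| I exhibit F_i G_j in c(FG). *)

Section PureIdeal.
Variables (R : comNzRingType) (I : ideal R).

Lemma ideal0 : 0 \in I.
Proof. by case: (ideal_is_ideal I). Qed.

Lemma idealB : {in I &, forall x y, x - y \in I}.
Proof. by case: (ideal_is_ideal I). Qed.

HB.instance Definition _ :=
  GRing.isZmodClosed.Build R (ideal_pred I) (conj ideal0 idealB).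

Lemma idealMl r x : x \in I -> r * x \in I.
Proof. by case: (ideal_is_ideal I) => _ _; apply. Qed.

Lemma pure_ideal_local_unit :
  pure_ideal I -> {in I, forall a, exists2 e, e \in I & e * a = a}.
Proof.
move=> [_ flatI] a aI.
pose Ra : {pred R^o} := fun x => `[< exists r : R, x = r * a >].
have Ra_submod : is_submodule Ra.
  split.
  - by apply/asboolP; exists 0; rewrite mul0r.
  - move=> _ _ /asboolP[r ->] /asboolP[s ->].
    by apply/asboolP; exists (r - s); rewrite mulrBl.
  - move=> t _ /asboolP[r ->]; apply/asboolP; exists (t * r).
    exact: mulrA.
have aRa : (a : R^o) \in Ra by apply/asboolP; exists 1; rewrite mul1r.
have aIR : ideal_smul I [pred x : R^o | true] a.
  exists 1%N, (fun _ => a), (fun _ => 1 : R^o); split => //.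
  by rewrite big_ord1 [_ *: _]mulr1.
have [n [c [x [cxI a_eq]]]] := flatI _ _ Ra_submod a aRa aIR.
suff [e eI e_eq] : exists2 e, e \in I & \sum_(k < n) c k *: x k = e * a.
  by exists e; rewrite // -e_eq -a_eq.
apply: (big_ind (fun y => exists2 e, e \in I & y = e * a)) => /=.
- by exists 0; rewrite ?mul0r ?rpred0.
- move=> _ _ [e1 e1I ->] [e2 e2I ->].
  by exists (e1 + e2); rewrite ?mulrDl ?rpredD.
- move=> k _; case: (cxI k) => ckI /asboolP[r ->].
  exists (r * c k); first exact: idealMl.
  by rewrite [r * c k]mulrC; exact: mulrA.
Qed.

Lemma pure_ideal_local_unit_seq (s : seq R) : pure_ideal I -> all (mem I) s ->
  exists2 e, e \in I & {in s, forall x, e * x = x}.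
Proof.
move=> pureI; elim: s => [_ | a s IHs /andP[aI sI]].
  by exists 0; rewrite ?rpred0.
have [e1 e1I he1] := IHs sI; have [e2 e2I he2] := pure_ideal_local_unit pureI aI.
exists (e1 + e2 - e1 * e2); first by rewrite rpredB ?rpredD ?idealMl.
move=> x; rewrite in_cons => /predU1P[-> | xs].
  by rewrite mulrBl mulrDl -mulrA he2 addrAC subrr add0r.
by rewrite mulrBl mulrDl [e1 * e2]mulrC -mulrA he1 // addrK.
Qed.

End PureIdeal.

Section Content.
Variable A : comNzRingType.

(* [content] with weights indexed by [nat] rather than ['I_(size p)], so that
   polynomials of different sizes can share weights. *)
Definition content_nat (p : {poly A}) (a : A) : Prop :=
  exists w : nat -> A, a = \sum_(i < size p) w i * p`_i.

Lemma sum_coef_trunc n (w : nat -> A) (p : {poly A}) :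
  \sum_(i < n) w i * p`_i =
  \sum_(i < size p) (if (i < n)%N then w i else 0) * p`_i.
Proof.
pose N := maxn n (size p).
rewrite (big_ord_widen N (fun i => w i * p`_i) (leq_maxl _ _)).
rewrite (big_ord_widen N (fun i => (if (i < n)%N then w i else 0) * p`_i)
  (leq_maxr _ _)).
rewrite big_mkcond [RHS]big_mkcond; apply: eq_bigr => i _.
case: ifP => _; last by rewrite mul0r if_same.
by case: ltnP => // le_p_i; rewrite nth_default ?mulr0.
Qed.

Lemma sum_coef_widen n (w : nat -> A) (p : {poly A}) : (size p <= n)%N ->
  \sum_(i < n) w i * p`_i = \sum_(i < size p) w i * p`_i.
Proof.
move=> le_p_n; rewrite sum_coef_trunc; apply: eq_bigr => i _.
by rewrite (leq_trans (ltn_ord i) le_p_n).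
Qed.

Lemma content_natP p a : content_nat p a <-> content p a.
Proof.
split=> [[w ->] | [u ->]]; first by exists (fun k => w (val k)).
by exists (fun i => oapp u 0 (insub i)); apply: eq_bigr => i _; rewrite valK.
Qed.

Lemma content_nat_sum p n (w : nat -> A) :
  content_nat p (\sum_(i < n) w i * p`_i).
Proof.
by exists (fun i => if (i < n)%N then w i else 0); apply: sum_coef_trunc.
Qed.

Lemma content_nat0 p : content_nat p 0.
Proof. by have := content_nat_sum p 0 (fun _ => 0); rewrite big_ord0. Qed.

Lemma content_natD p a b :
  content_nat p a -> content_nat p b -> content_nat p (a + b).
Proof.
move=> [v ->] [w ->]; exists (fun i => v i + w i).
by rewrite -big_split; apply: eq_bigr => i _; rewrite mulrDl.
Qed.

Lemma content_natMl p r a : content_nat p a -> content_nat p (r * a).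
Proof.
move=> [w ->]; exists (fun i => r * w i).
by rewrite mulr_sumr; apply: eq_bigr => i _; rewrite mulrA.
Qed.

Lemma content_nat_big p n (F : 'I_n -> A) :
  (forall k, content_nat p (F k)) -> content_nat p (\sum_(k < n) F k).
Proof.
by move=> F_in; apply: big_ind => //; [apply: content_nat0 | apply: content_natD].
Qed.

Lemma content_nat_coef p k : content_nat p p`_k.
Proof.
have := content_nat_sum p k.+1 (fun i => (i == k)%:R).
rewrite big_ord_recr /= eqxx mul1r big1 ?add0r // => i _.
by rewrite (ltn_eqF (ltn_ord i)) mul0r.
Qed.

Section IdealProd.
Variables J K : A -> Prop.

Lemma ideal_prod0 : ideal_prod J K 0.
Proof.
by exists 0%N, (fun _ => 0), (fun _ => 0); split; [case | rewrite big_ord0].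
Qed.

Lemma ideal_prodM x y : J x -> K y -> ideal_prod J K (x * y).
Proof. by exists 1%N, (fun _ => x), (fun _ => y); rewrite big_ord1. Qed.

Lemma ideal_prodD a b :
  ideal_prod J K a -> ideal_prod J K b -> ideal_prod J K (a + b).
Proof.
move=> [m [x [y [Jx ->]]]] [n [x' [y' [Jx' ->]]]].
pose glue T (u : 'I_m -> T) (v : 'I_n -> T) k :=
  match split k with inl i => u i | inr j => v j end.
exists (m + n)%N, (glue _ x x'), (glue _ y y'); split.
  by move=> k; rewrite /glue; case: (split k).
by rewrite big_split_ord /glue; congr (_ + _); apply: eq_bigr => i _;
  [rewrite (unsplitK (inl i)) | rewrite (unsplitK (inr i))].
Qed.

Lemma ideal_prod_big n (F : 'I_n -> A) :
  (forall k, ideal_prod J K (F k)) -> ideal_prod J K (\sum_(k < n) F k).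
Proof.
by move=> F_in; apply: big_ind => //; [apply: ideal_prod0 | apply: ideal_prodD].
Qed.

End IdealProd.

Lemma content_mul_sub (f g : {poly A}) a :
  content (f * g) a -> ideal_prod (content f) (content g) a.
Proof.
move/content_natP => [w ->]; apply: ideal_prod_big => k.
rewrite coefM mulr_sumr; apply: ideal_prod_big => j.
by rewrite mulrA; apply: ideal_prodM; apply/content_natP;
  [apply/content_natMl/content_nat_coef | apply: content_nat_coef].
Qed.

Definition gaussian_coef : Prop :=
  forall (f g : {poly A}) i j, content_nat (f * g) (f`_i * g`_j).

Lemma gaussianP : gaussian A <-> gaussian_coef.
Proof.
split=> [gaussA f g i j | gaussA f g a].
  by apply/content_natP/gaussA/ideal_prodM; apply/content_natP/content_nat_coef.
split; first exact: content_mul_sub.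
move=> [n [x [y [xy_in ->]]]]; apply/content_natP/content_nat_big => k.
have [/content_natP[u ->] /content_natP[v ->]] := xy_in k.
rewrite mulr_suml; apply: content_nat_big => i.
rewrite mulr_sumr; apply: content_nat_big => j.
have -> : u i * f`_i * (v j * g`_j) = u i * v j * (f`_i * g`_j) by ring.
exact/content_natMl/gaussA.
Qed.

End Content.

Section Morphisms.
Variables (A B : comNzRingType) (phi : {rmorphism B -> A}).

Lemma content_nat_map (P : {poly B}) b :
  content_nat P b -> content_nat (map_poly phi P) (phi b).
Proof.
move=> [w ->]; rewrite rmorph_sum.
under eq_bigr => k _ do rewrite rmorphM -coef_map.
exact: (content_nat_sum _ _ (fun k => phi (w k))).
Qed.

Lemma gaussian_coef_retract (s : A -> B) :
  s 0 = 0 -> cancel s phi -> gaussian_coef B -> gaussian_coef A.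
Proof.
move=> s0 sK gaussB f g i j.
have liftK p : map_poly phi (map_poly s p) = p.
  by rewrite -map_poly_comp_id0 ?rmorph0 // map_poly_id // => x _ /=; apply: sK.
have := content_nat_map (gaussB (map_poly s f) (map_poly s g) i j).
by rewrite !rmorphM /= !liftK !coef_map_id0 // !sK.
Qed.

Lemma eq_map_poly_scaled (psi : {rmorphism B -> A}) (c : A) (P : {poly B}) :
  {in (P : seq B), forall x, c * phi x = c * psi x} ->
  c%:P * map_poly phi P = c%:P * map_poly psi P.
Proof.
move=> eq_P; apply/polyP => k; rewrite !coefCM !coef_map.
have [lt_k_P | le_P_k] := ltnP k (size P); first exact/eq_P/mem_nth.
by rewrite nth_default // !raddf0.
Qed.

End Morphisms.

Lemma scaled_eq_mul (A : comNzRingType) (c x x' y y' : A) :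
  c * x = c * x' -> c * y = c * y' -> c * (x * y) = c * (x' * y').
Proof. by move=> eq_x eq_y; rewrite mulrA eq_x mulrAC eq_y mulrAC -mulrA. Qed.

Section Amalgamation.
Variables (R : comNzRingType) (I : ideal R).
Local Notation RI := (amalg I).

Definition amalg_fst : {rmorphism RI -> R} := fst \o val.
Definition amalg_snd : {rmorphism RI -> R} := snd \o val.

Lemma amalg_eq (x y : RI) :
  amalg_fst x = amalg_fst y -> amalg_snd x = amalg_snd y -> x = y.
Proof.
move=> eq1 eq2; apply: val_inj; move: eq1 eq2 => /=.
by case: (val x) (val y) => [? ?] [? ?] /= -> ->.
Qed.

Lemma amalg_snd_subr_fst (x : RI) : amalg_snd x - amalg_fst x \in I.
Proof. by case: x => [[r s] rsI]. Qed.

Definition amalg_pair (r s : R) (rsI : s - r \in I) : RI := @Amalg R I (r, s) rsI.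

Fact amalg_diag_subproof (r : R) : r - r \in I.
Proof. by rewrite subrr ideal0. Qed.

Definition amalg_diag (r : R) : RI := amalg_pair (amalg_diag_subproof r).

Lemma amalg_diag0 : amalg_diag 0 = 0.
Proof. exact: val_inj. Qed.

Lemma amalg_diagK : cancel amalg_diag amalg_fst.
Proof. by []. Qed.

Lemma content_nat_amalg (P : {poly RI}) z (a b : nat -> R) :
  (forall k, b k - a k \in I) ->
  amalg_fst z = \sum_(k < size P) a k * (map_poly amalg_fst P)`_k ->
  amalg_snd z = \sum_(k < size P) b k * (map_poly amalg_snd P)`_k ->
  content_nat P z.
Proof.
move=> abI eq1 eq2; exists (fun k => amalg_pair (abI k)).
by apply: amalg_eq; rewrite ?eq1 ?eq2 rmorph_sum; apply: eq_bigr => k _;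
  rewrite rmorphM coef_map.
Qed.

Lemma amalg_local_unit (s : seq RI) : pure_ideal I -> exists2 e, e \in I &
  {in s, forall x, (1 - e) * amalg_snd x = (1 - e) * amalg_fst x}.
Proof.
move=> pureI.
pose d := [seq amalg_snd x - amalg_fst x | x <- s].
have [|e eI he] := pure_ideal_local_unit_seq (s := d) pureI.
  by apply/allP => _ /mapP[x _ ->]; apply: amalg_snd_subr_fst.
exists e => // x xs; apply/eqP; rewrite -subr_eq0 -mulrBr mulrBl mul1r.
by rewrite he ?subrr //; apply: (map_f (fun x => amalg_snd x - amalg_fst x)).
Qed.

Lemma gaussian_coef_amalg : pure_ideal I -> gaussian_coef R -> gaussian_coef RI.
Proof.
move=> pureI gaussR F G i j.
set f := map_poly amalg_fst F; set g := map_poly amalg_fst G.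
set h := map_poly amalg_snd F; set h' := map_poly amalg_snd G.
have [e eI he] := amalg_local_unit (F ++ G) pureI.
pose c := 1 - e.
have eq_hf : c%:P * h = c%:P * f.
  by apply: eq_map_poly_scaled => x xF; apply: he; rewrite mem_cat xF.
have eq_hg : c%:P * h' = c%:P * g.
  by apply: eq_map_poly_scaled => x xG; apply: he; rewrite mem_cat xG orbT.
have eq_prod := scaled_eq_mul eq_hf eq_hg.
have eq_ij : c * (h`_i * h'`_j) = c * (f`_i * g`_j).
  by apply: scaled_eq_mul; rewrite -!coefCM ?eq_hf ?eq_hg.
have [a eq_a] := gaussR f g i j; have [b eq_b] := gaussR h h' i j.
have size_fg : (size (f * g)%R <= size (F * G)%R)%N.
  by rewrite -rmorphM; apply: size_poly.
have size_hh' : (size (h * h')%R <= size (F * G)%R)%N.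
  by rewrite -rmorphM; apply: size_poly.
apply: (@content_nat_amalg _ _ a (fun k => c * a k + e * b k)).
- move=> k; have -> : c * a k + e * b k - a k = (b k - a k) * e.
    by rewrite /c; ring.
  exact: idealMl.
- by rewrite rmorphM -!coef_map rmorphM /= -/f -/g sum_coef_widen.
rewrite rmorphM -!coef_map rmorphM /= -/h -/h'.
have -> : \sum_(k < size (F * G)) (c * a k + e * b k) * (h * h')`_k =
    c * \sum_(k < size (F * G)) a k * (f * g)`_k +
    e * \sum_(k < size (F * G)) b k * (h * h')`_k.
  rewrite !mulr_sumr -big_split /=; apply: eq_bigr => k _.
  have eq_k : c * (h * h')`_k = c * (f * g)`_k by rewrite -!coefCM eq_prod.
  by rewrite mulrCA -eq_k; ring.
by rewrite !sum_coef_widen // -eq_a -eq_b -eq_ij /c; ring.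
Qed.

End Amalgamation.

Theorem corollary2p6 (R : comNzRingType) (I : ideal R) :
  reduced R -> pure_ideal I ->
  (gaussian R <-> gaussian (amalg I)).
Proof.
move=> _ pureI; rewrite !gaussianP; split; first exact: gaussian_coef_amalg.
exact: gaussian_coef_retract (@amalg_diag0 R I) (@amalg_diagK R I).
Qed.
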